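(* Let $G$ be a finite connected graph. For any integers $0 \le f < n$, there exists an $f$-resilient synchronous message-passing algorithm for $n$ processes that solves graphical approximate agreement on $G$ in $\lfloor f/2 \rfloor + \lceil \log_2 \mathrm{diam}(G) \rceil + 1$ rounds.
   Context: Graphical approximate agreement on $G$: each process receives an input vertex and each non-crashed process outputs a vertex such that any two outputs are equal or adjacent in $G$ and every output lies on a shortest path in $G$ between two (not necessarily distinct) inputs. $\mathrm{diam}(G)$ is the maximum distance between two vertices of $G$. Synchronous message-passing model: $n$ fully connected processes, computation in synchronous rounds; in each round every process sends its entire state to every other process and messages from non-faulty processes arrive within the round; processes may crash. An $f$-resilient solution using $T$ rounds: in every execution with at most $f$ crashes, all non-crashed processes decide valid outputs by the end of round $T$. *)

From mathcomp Require Import all_boot.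
Set Implicit Arguments. Unset Strict Implicit. Unset Printing Implicit Defensive.

Definition dist_le (T : finType) (e : rel T) (x y : T) (k : nat) : Prop :=
  exists p : seq T, [/\ path e x p, last x p = y & size p <= k].

Definition is_diam (T : finType) (e : rel T) (d : nat) : Prop :=
  (forall x y, dist_le e x y d) /\
  (exists x y, forall k, dist_le e x y k -> d <= k).

Definition on_shortest_path (T : finType) (e : rel T) (u v z : T) : Prop :=
  exists p : seq T,
    [/\ path e u p, last u p = v,
        (forall q : seq T, path e u q -> last u q = v -> size p <= size q)
      & z \in u :: p].

(* The local state (view) of a process in the full-information protocol:
   initially its identifier and input; after each round, its previous state
   together with, for every process j, the state received from j (None if
   no message from j arrived in that round). *)
Inductive view (n : nat) (T : Type) : Type :=
| VInit : 'I_n -> T -> view n T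
| VStep : view n T -> ('I_n -> option (view n T)) -> view n T.

(* A failure pattern: crash j = None means j never crashes; crash j = Some c
   means j crashes in round c (rounds are numbered 1, 2, ...): it sends
   normally in rounds < c, in round c its message reaches exactly the
   processes i with deliv j i, and afterwards it sends nothing. *)
Definition sends (n : nat) (crash : 'I_n -> option nat)
    (deliv : 'I_n -> 'I_n -> bool) (r : nat) (j i : 'I_n) : bool :=
  match crash j with
  | None => true
  | Some c => (r < c) || ((r == c) && deliv j i)
  end.

Fixpoint state (n : nat) (T : Type) (inp : 'I_n -> T)
    (crash : 'I_n -> option nat) (deliv : 'I_n -> 'I_n -> bool)
    (r : nat) (i : 'I_n) : view n T :=
  match r with
  | 0 => VInit i (inp i)
  | r'.+1 => VStep (state inp crash deliv r' i)
      (fun j => if sends crash deliv r'.+1 j i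
                then Some (state inp crash deliv r' j) else None)
  end.

Definition alive_after (n : nat) (crash : 'I_n -> option nat) (R : nat) (i : 'I_n) : bool :=
  match crash i with None => true | Some c => R < c end.

Definition num_crashes (n : nat) (crash : 'I_n -> option nat) : nat :=
  #|[pred j : 'I_n | crash j != None]|.

Definition solves_GAA (T : finType) (e : rel T) (n f R : nat)
    (dec : view n T -> T) : Prop :=
  forall (inp : 'I_n -> T) (crash : 'I_n -> option nat)
         (deliv : 'I_n -> 'I_n -> bool),
    num_crashes crash <= f ->
    (forall i j : 'I_n, alive_after crash R i -> alive_after crash R j ->
       let oi := dec (state inp crash deliv R i) in
       let oj := dec (state inp crash deliv R j) in
       (oi = oj) \/ e oi oj) /\
    (forall i : 'I_n, alive_after crash R i ->
       exists a b : 'I_n,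
         on_shortest_path e (inp a) (inp b) (dec (state inp crash deliv R i))).

From mathcomp Require Import all_boot zify.
Set Implicit Arguments. Unset Strict Implicit. Unset Printing Implicit Defensive.

(* The algorithm runs in two phases.  Vertices are compared through an
   injective key (their enumeration rank).
   - Phase 1 (rounds 1 .. R1 = f/2 + 1): every process adopts the key-least
     input it has heard of.  Since fewer than 2 * R1 processes crash, some
     phase-1 round has at most one crash; after it the survivors split into
     those that heard from the crasher and those that did not, and within each
     class all hold the same value.  So phase 1 ends with at most two candidate
     inputs u, v (key u <= key v) held by the survivors.
   - Phase 2 (the next ceil(log2 d) rounds): a process that has heard of both
     candidates places itself on a fixed shortest walk from u to v and moves to
     the midpoint of the extreme positions it has heard of.  The spread of the
     positions of the survivors goes from at most d to at most 1, so the final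
     vertices are equal or adjacent, and all lie on a shortest u-v walk. *)

Section SelectByKey.
Variables (X : eqType) (k : X -> nat).

Definition kmin (x y : X) : X := if k x <= k y then x else y.
Definition kmax (x y : X) : X := if k x <= k y then y else x.

Definition minby (x0 : X) (l : seq X) : X := foldr kmin x0 l.
Definition maxby (x0 : X) (l : seq X) : X := foldr kmax x0 l.

Lemma minby_mem x0 l : minby x0 l \in x0 :: l.
Proof.
elim: l => [|a l IH] /=; first exact: mem_head.
rewrite /kmin; case: ifP => _; first by rewrite !inE eqxx orbT.
by move: IH; rewrite !inE => /orP [->|->]; rewrite ?orbT.
Qed.

Lemma maxby_mem x0 l : maxby x0 l \in x0 :: l.
Proof.
elim: l => [|a l IH] /=; first exact: mem_head.
rewrite /kmax; case: ifP => _; last by rewrite !inE eqxx orbT.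
by move: IH; rewrite !inE => /orP [->|->]; rewrite ?orbT.
Qed.

Lemma minby_le x0 l y : y \in x0 :: l -> k (minby x0 l) <= k y.
Proof.
elim: l y => [|a l IH] y /=; first by rewrite inE => /eqP ->.
have IH0 := IH x0 (mem_head _ _).
rewrite !inE /kmin => /or3P [/eqP ->|/eqP ->|Hy]; case: ifP => //; try lia.
all: move=> Hc; have := IH y; rewrite inE Hy orbT => /(_ isT); lia.
Qed.

Lemma maxby_ge x0 l y : y \in x0 :: l -> k y <= k (maxby x0 l).
Proof.
elim: l y => [|a l IH] y /=; first by rewrite inE => /eqP ->.
have IH0 := IH x0 (mem_head _ _).
rewrite !inE /kmax => /or3P [/eqP ->|/eqP ->|Hy]; case: ifP => //; try lia.
all: move=> Hc; have := IH y; rewrite inE Hy orbT => /(_ isT); lia.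
Qed.

Lemma minby_nseq x0 m : minby x0 (nseq m x0) = x0.
Proof. by elim: m => //= m ->; rewrite /kmin leqnn. Qed.

Lemma maxby_nseq x0 m : maxby x0 (nseq m x0) = x0.
Proof. by elim: m => //= m ->; rewrite /kmax leqnn. Qed.

Hypothesis k_inj : injective k.

Lemma minby_pair u v x0 l : k u <= k v -> {subset x0 :: l <= [:: u; v]} ->
  u \in x0 :: l -> minby x0 l = u.
Proof.
move=> Huv Hsub Hu; have := minby_le Hu.
have := Hsub _ (minby_mem x0 l); rewrite !inE => /orP [/eqP //|/eqP ->] Hvu.
by apply/k_inj; lia.
Qed.

Lemma maxby_pair u v x0 l : k u <= k v -> {subset x0 :: l <= [:: u; v]} ->
  v \in x0 :: l -> maxby x0 l = v.
Proof.
move=> Huv Hsub Hv; have := maxby_ge Hv.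
have := Hsub _ (maxby_mem x0 l); rewrite !inE => /orP [/eqP ->|/eqP //] Hvu.
by apply/k_inj; lia.
Qed.

Lemma minby_eq_mem x0 l y0 l' : x0 :: l =i y0 :: l' -> minby x0 l = minby y0 l'.
Proof.
move=> Heq; apply/k_inj/anti_leq/andP; split; apply: minby_le.
- by rewrite Heq minby_mem.
- by rewrite -Heq minby_mem.
Qed.

End SelectByKey.

Definition rank_key (T : finType) (x : T) : nat := enum_rank x.

Lemma rank_key_inj (T : finType) : injective (@rank_key T).
Proof. by move=> x y /val_inj /enum_rank_inj. Qed.

Lemma two_classes (I : finType) (X : Type) (A : pred I) (b : I -> bool) (g : I -> X) (i0 : I) :
  {in A &, forall i k, b i = b k -> g i = g k} ->
  exists i1 i2, {in A, forall i, g i = g i1 \/ g i = g i2}.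
Proof.
move=> Hclass; have class_rep (c : bool) : exists i1, {in A, forall i, b i = c -> g i = g i1}.
  case: (pickP [pred i | (i \in A) && (b i == c)]) => [i1 /andP [Hi1 /eqP Hb1]|none].
  - by exists i1 => i Hi Hb; apply: Hclass => //; rewrite Hb Hb1.
  - by exists i0 => i Hi Hb; have := none i; rewrite /= Hi Hb eqxx.
have [i1 H1] := class_rep false; have [i2 H2] := class_rep true.
by exists i1, i2 => i Hi; case: (boolP (b i)) => Hb; [right; apply: H2|left; apply: H1 => //; apply/negbTE].
Qed.

Lemma midpoint_spread a1 b1 a2 b2 W : a1 <= b2 -> b1 <= a2 + W ->
  (a1 + b1)./2 <= (a2 + b2)./2 + uphalf W.
Proof. by rewrite uphalf_half; lia. Qed.

Lemma iter_uphalf_le1 k w : w <= 2 ^ k -> iter k uphalf w <= 1.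
Proof.
elim: k w => [|k IH] w Hw; first by rewrite expn0 in Hw.
by rewrite iterSr; apply: IH; rewrite expnS in Hw; rewrite uphalf_half; lia.
Qed.

Section ShortestWalks.
Variables (T : finType) (e : rel T).

Definition shortest_walk (a b : T) (p : seq T) : Prop :=
  [/\ path e a p, last a p = b &
      forall q, path e a q -> last a q = b -> size p <= size q].

(* In a finite graph a shortest walk between connected vertices can be
   computed: take the least length admitting a walk, then pick one. *)
Lemma shortest_walk_sig (a b : T) : connect e a b -> {p : seq T | shortest_walk a b p}.
Proof.
move=> Hab.
pose walk_of_len m := [exists t : m.-tuple T, path e a t && (last a t == b)].
have ex_len : exists m, walk_of_len m.
  have /connectP [p Hp Hl] := Hab.
  by exists (size p); apply/existsP; exists (in_tuple p); rewrite Hp Hl eqxx.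
case: (ex_minnP ex_len) => m Hm Hmin.
case: (pickP (fun t : m.-tuple T => path e a t && (last a t == b))) =>
    [t /andP [Ht /eqP Hl]|Hnone]; last first.
  exfalso; move/existsP: Hm => [t /andP [Ht /eqP Hl]].
  by have := Hnone t; rewrite Ht Hl eqxx.
exists t; split => // q Hq Hlq; rewrite size_tuple; apply: Hmin.
by apply/existsP; exists (in_tuple q); rewrite Hq Hlq eqxx.
Qed.

Lemma walk_close_vertices (p : seq T) a g1 g2 : symmetric e -> path e a p ->
  g1 <= size p -> g2 <= size p -> g1 <= g2 + 1 -> g2 <= g1 + 1 ->
  nth a (a :: p) g1 = nth a (a :: p) g2 \/ e (nth a (a :: p) g1) (nth a (a :: p) g2).
Proof.
move=> e_sym /(pathP a) Hp H1 H2 H3 H4.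
case: (ltngtP g1 g2) => h; [right|right|by left; rewrite h].
- have -> : g2 = g1.+1 by lia.
  by apply: Hp; lia.
- have -> : g1 = g2.+1 by lia.
  by rewrite e_sym; apply: Hp; lia.
Qed.

End ShortestWalks.

Section CrashPattern.
Variables (n : nat) (crash : 'I_n -> option nat) (deliv : 'I_n -> 'I_n -> bool).

Lemma alive_pred r i : alive_after crash r.+1 i -> alive_after crash r i.
Proof. by rewrite /alive_after; case: (crash i) => // c; lia. Qed.

Lemma alive_sends r j i : alive_after crash r.+1 j -> sends crash deliv r.+1 j i.
Proof. by rewrite /alive_after /sends; case: (crash j) => // c ->. Qed.

Lemma sends_alive r j i : sends crash deliv r.+1 j i -> alive_after crash r j.
Proof.
by rewrite /alive_after /sends; case: (crash j) => // c /orP [|/andP [/eqP -> _]]; lia.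
Qed.

Definition crashing_at (r : nat) : pred 'I_n := [pred j | crash j == Some r].

Lemma alive_succ r j : alive_after crash r j -> j \notin crashing_at r.+1 ->
  alive_after crash r.+1 j.
Proof.
rewrite /alive_after inE; case: (crash j) => // c H Hc.
have : c != r.+1 by apply: contra Hc => /eqP ->.
lia.
Qed.

Definition crashed_by (R : nat) : pred 'I_n :=
  [pred j | if crash j is Some c then 0 < c <= R else false].

Lemma crashed_by_succ R : #|crashed_by R.+1| = #|crashed_by R| + #|crashing_at R.+1|.
Proof.
rewrite -cardUI; have -> : #|[predI crashed_by R & crashing_at R.+1]| = 0.
  apply: eq_card0 => j; rewrite !inE; case: (crash j) => // c.
  by rewrite [Some c == _]/eq_op /=; lia.
rewrite addn0; apply: eq_card => j; rewrite !inE; case: (crash j) => // c.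
by rewrite [Some c == _]/eq_op /=; lia.
Qed.

Lemma quiet_round R : num_crashes crash < 2 * R ->
  exists2 r, r < R & #|crashing_at r.+1| <= 1.
Proof.
move=> Hf; have crashed_le : #|crashed_by R| <= num_crashes crash.
  by apply/subset_leq_card/subsetP => j; rewrite !inE; case: (crash j).
suff : (exists2 r, r < R & #|crashing_at r.+1| <= 1) \/ 2 * R <= #|crashed_by R|.
  by case=> // busy; have := leq_trans busy crashed_le; lia.
elim: R {Hf crashed_le} => [|R [[r Hr Hc]|IH]]; first by right.
- by left; exists r => //; lia.
- case: (leqP #|crashing_at R.+1| 1) => Hc; first by left; exists R.
  by right; rewrite crashed_by_succ; lia.
Qed.

End CrashPattern.

Section Protocol.
Variables (T : finType) (sp : T -> T -> seq T) (R1 : nat).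

(* Local state (lo, hi, pos) of the algorithm.  In rounds 1..R1 it is (x, x, 0)
   for the current candidate x; afterwards it denotes the vertex at position
   pos on the chosen walk sp lo hi. *)
Definition pstate : Type := (T * T * nat)%type.
Definition lo (s : pstate) : T := s.1.1.
Definition hi (s : pstate) : T := s.1.2.
Definition pos (s : pstate) : nat := s.2.

Definition coord (a b : T) (s : pstate) : nat :=
  if lo s == hi s then (if lo s == a then 0 else size (sp a b)) else pos s.

Definition phase1_step (own : pstate) (rcv : seq pstate) : pstate :=
  let a := minby (@rank_key T) (lo own) (map lo rcv) in (a, a, 0).

Definition phase2_step (own : pstate) (rcv : seq pstate) : pstate :=
  let a := minby (@rank_key T) (lo own) (map lo rcv) in
  let b := maxby (@rank_key T) (hi own) (map hi rcv) in
  let c := coord a b in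
  (a, b, (minby id (c own) (map c rcv) + maxby id (c own) (map c rcv))./2).

Definition round_step (r : nat) : pstate -> seq pstate -> pstate :=
  if r <= R1 then phase1_step else phase2_step.

Variable n : nat.

Fixpoint depth (v : view n T) : nat :=
  if v is VStep w _ then (depth w).+1 else 0.

Fixpoint run (v : view n T) : pstate :=
  match v with
  | VInit _ x => (x, x, 0)
  | VStep w m => round_step (depth w).+1 (run w)
      (pmap (fun j => if m j is Some w' then Some (run w') else None) (enum 'I_n))
  end.

Definition vertex (s : pstate) : T := nth (lo s) (lo s :: sp (lo s) (hi s)) (pos s).

Definition decide (v : view n T) : T := vertex (run v).

Lemma phase1_step_mem own rcv :
  exists2 s, s \in own :: rcv & phase1_step own rcv = (lo s, lo s, 0).
Proof.
rewrite /phase1_step; have /mapP [s Hs ->] : minby (@rank_key T) (lo own) (map lo rcv) \in map lo (own :: rcv).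
  exact: minby_mem.
by exists s.
Qed.

Variant on_segment (u v : T) : pstate -> Prop :=
| SegLo : on_segment u v (u, u, 0)
| SegHi : on_segment u v (v, v, 0)
| SegIn t : u != v -> t <= size (sp u v) -> on_segment u v (u, v, t).

Lemma on_segment_ends u v s : on_segment u v s -> lo s \in [:: u; v] /\ hi s \in [:: u; v].
Proof. by case=> *; rewrite !inE !eqxx ?orbT. Qed.

Lemma coord_le u v s : on_segment u v s -> coord u v s <= size (sp u v).
Proof. by case=> [||t /negPf Huv Ht]; rewrite /coord /= ?eqxx ?Huv //; case: ifP. Qed.

Lemma on_segment_self u v s : on_segment u v s -> (lo s, hi s, coord (lo s) (hi s) s) = s.
Proof. by case=> [||t /negPf Huv _]; rewrite /coord /= ?eqxx ?Huv. Qed.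

Lemma on_segment_distinct u v s s' : on_segment u v s -> on_segment u v s' -> s != s' ->
  [/\ u != v, u \in [:: lo s; lo s'] & v \in [:: hi s; hi s']].
Proof.
move=> Hs Hs' H; have Huv : u != v.
  apply: contraNneq H => Euv; subst v.
  by case: Hs Hs' => [||t]; rewrite ?eqxx //; case=> [||t']; rewrite ?eqxx.
split=> //; case: Hs Hs' H => [||t _ _]; case=> [||t' _ _];
  by rewrite /lo /hi /= !inE !eqxx ?orbT.
Qed.

Lemma vertex_coord u v s : on_segment u v s -> last u (sp u v) = v ->
  vertex s = nth u (u :: sp u v) (coord u v s).
Proof.
case=> [||t /negPf Huv _] Hl; rewrite /vertex /coord /= ?eqxx ?Huv //.
by case: eqP => [->//|_]; rewrite -(last_nth u u) Hl.
Qed.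

Lemma phase2_step_const u v own m : on_segment u v own -> phase2_step own (nseq m own) = own.
Proof.
move=> Hown; rewrite /phase2_step !map_nseq !minby_nseq !maxby_nseq.
by rewrite addnn doubleK (on_segment_self Hown).
Qed.

Lemma phase2_step_mid u v own rcv : rank_key u <= rank_key v ->
  {in own :: rcv, forall s, on_segment u v s} ->
  let c := coord u v in
  on_segment u v (phase2_step own rcv) /\
  c (phase2_step own rcv) = (minby id (c own) (map c rcv) + maxby id (c own) (map c rcv))./2.
Proof.
move=> Hkey Hseg c; have Hown := Hseg own (mem_head _ _).
case: (boolP (all (pred1 own) rcv)) => [/all_pred1P -> | /allPn [s Hs Hneq]].
  by rewrite (phase2_step_const _ Hown) !map_nseq !minby_nseq !maxby_nseq addnn doubleK.
have [Huv Hu Hv] : [/\ u != v, u \in [:: lo own; lo s] & v \in [:: hi own; hi s]].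
  by apply: on_segment_distinct => //; [apply: Hseg; rewrite inE Hs orbT | rewrite eq_sym].
have Hheard (f : pstate -> T) : {subset [:: f own; f s] <= map f (own :: rcv)}.
  by move=> w; rewrite !inE => /orP [] /eqP ->; rewrite ?eqxx // (map_f f Hs) orbT.
have Hlo : {subset map lo (own :: rcv) <= [:: u; v]}.
  by move=> x /mapP [s' /Hseg /on_segment_ends [Hl _] ->].
have Hhi : {subset map hi (own :: rcv) <= [:: u; v]}.
  by move=> x /mapP [s' /Hseg /on_segment_ends [_ Hh] ->].
rewrite /phase2_step (minby_pair (@rank_key_inj T) Hkey Hlo (Hheard lo _ Hu)).
rewrite (maxby_pair (@rank_key_inj T) Hkey Hhi (Hheard hi _ Hv)) -/c.
have Hmin := @minby_le _ id (c own) (map c rcv) _ (mem_head _ _).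
have Hmax := @maxby_ge _ id (c own) (map c rcv) _ (mem_head _ _).
have HM : maxby id (c own) (map c rcv) <= size (sp u v).
  have /mapP [s2 /Hseg /coord_le HL ->] : maxby id (c own) (map c rcv) \in map c (own :: rcv).
    exact: maxby_mem.
  exact: HL.
split; first by apply: SegIn => //; lia.
by rewrite /c /coord /= (negPf Huv).
Qed.

Lemma phase2_step_spec u v own rcv : rank_key u <= rank_key v ->
  {in own :: rcv, forall s, on_segment u v s} ->
  on_segment u v (phase2_step own rcv) /\
  exists s1 s2, [/\ s1 \in own :: rcv, s2 \in own :: rcv,
    {in own :: rcv, forall s, coord u v s1 <= coord u v s <= coord u v s2} &
    coord u v (phase2_step own rcv) = (coord u v s1 + coord u v s2)./2].
Proof.
move=> Hkey Hseg; have [Hon Hmid] := phase2_step_mid Hkey Hseg.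
set c := coord u v in Hmid *; split=> //.
have /mapP [s1 Hs1 Em] : minby id (c own) (map c rcv) \in map c (own :: rcv).
  exact: minby_mem.
have /mapP [s2 Hs2 EM] : maxby id (c own) (map c rcv) \in map c (own :: rcv).
  exact: maxby_mem.
exists s1, s2; split; rewrite -?Em -?EM // => s /(map_f c) Hc.
by rewrite (@minby_le _ id _ _ _ Hc) (@maxby_ge _ id _ _ _ Hc).
Qed.

End Protocol.
Arguments lo {T} s.
Arguments hi {T} s.
Arguments pos {T} s.
Arguments decide {T} sp R1 {n} v.

Section Execution.
Variables (T : finType) (sp : T -> T -> seq T) (R1 n : nat) (inp : 'I_n -> T)
  (crash : 'I_n -> option nat) (deliv : 'I_n -> 'I_n -> bool).

Let S (r : nat) (i : 'I_n) : pstate T := run sp R1 (state inp crash deliv r i).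

Definition received (r : nat) (i : 'I_n) : seq (pstate T) :=
  [seq S r j | j <- enum 'I_n & sends crash deliv r.+1 j i].

Lemma depth_state r i : depth (state inp crash deliv r i) = r.
Proof. by elim: r i => [|r IH] i //=; rewrite IH. Qed.

Lemma run_succ r i : S r.+1 i = round_step sp R1 r.+1 (S r i) (received r i).
Proof.
rewrite /S /= depth_state /received; congr round_step.
by elim: (enum 'I_n) => //= j s ->; case: sends.
Qed.

Lemma inbox_mem r i s : s \in S r i :: received r i ->
  exists2 j, j = i \/ sends crash deliv r.+1 j i & s = S r j.
Proof.
rewrite inE => /orP [/eqP ->|/mapP [j]]; first by exists i; [left|].
by rewrite mem_filter => /andP [Hj _] ->; exists j; [right|].
Qed.

Lemma inbox_alive r i s : alive_after crash r.+1 i -> s \in S r i :: received r i ->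
  exists2 j, alive_after crash r j & s = S r j.
Proof.
move=> Hi /inbox_mem [j Hj ->]; exists j => //.
by case: Hj => [->|]; [exact: alive_pred | exact: sends_alive].
Qed.

Lemma received_sender r i j : sends crash deliv r.+1 j i -> S r j \in received r i.
Proof. by move=> Hj; apply: map_f; rewrite mem_filter Hj mem_enum. Qed.

Lemma phase1_input r i : r <= R1 -> exists a, S r i = (inp a, inp a, 0).
Proof.
elim: r i => [|r IH] i Hr; first by exists i.
rewrite run_succ /round_step Hr.
have [s /inbox_mem [j _ ->] ->] := phase1_step_mem (S r i) (received r i).
by have [a ->] := IH j (ltnW Hr); exists a.
Qed.

Definition hears_crasher (r : nat) (i : 'I_n) : bool :=
  [exists j, (j \in crashing_at crash r.+1) && sends crash deliv r.+1 j i].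

Lemma inbox_sub r i k : #|crashing_at crash r.+1| <= 1 ->
  hears_crasher r i = hears_crasher r k ->
  alive_after crash r.+1 i -> alive_after crash r.+1 k ->
  {subset S r i :: received r i <= S r k :: received r k}.
Proof.
move=> Hquiet Hhear Hi Hk s /inbox_mem [j Hj ->]; rewrite inE; apply/orP; right.
apply: received_sender; case: Hj => [->|Hji]; first exact: alive_sends.
case: (boolP (j \in crashing_at crash r.+1)) => Hcj.
  have : hears_crasher r i by apply/existsP; exists j; rewrite Hcj Hji.
  rewrite Hhear => /existsP [j' /andP [Hcj' Hj'k]].
  by have := card_le1P Hquiet j Hcj j'; rewrite Hcj' inE => /esym /eqP <-.
by apply: alive_sends; apply: alive_succ Hcj; apply: sends_alive Hji.
Qed.

Lemma phase1_quiet_round r i k : r < R1 -> #|crashing_at crash r.+1| <= 1 ->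
  hears_crasher r i = hears_crasher r k ->
  alive_after crash r.+1 i -> alive_after crash r.+1 k -> S r.+1 i = S r.+1 k.
Proof.
move=> Hr Hquiet Hhear Hi Hk; rewrite !run_succ /round_step Hr /phase1_step.
have Hsame : S r i :: received r i =i S r k :: received r k.
  by move=> s; apply/idP/idP; apply: inbox_sub.
by rewrite (minby_eq_mem (@rank_key_inj T) (eq_mem_map lo Hsame)).
Qed.

Lemma phase1_stable x y r : r <= R1 ->
  (forall j, alive_after crash r j -> lo (S r j) \in [:: x; y]) ->
  forall i, alive_after crash R1 i -> lo (S R1 i) \in [:: x; y].
Proof.
move=> Hr Hxy.
suff stable m : r + m <= R1 ->
    forall i, alive_after crash (r + m) i -> lo (S (r + m) i) \in [:: x; y].
  by have := stable (R1 - r); rewrite subnKC //; apply.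
elim: m => [|m IH] Hm; first by rewrite addn0.
rewrite addnS => i Hi; rewrite run_succ /round_step ifT; last by rewrite -addnS.
have [s /(inbox_alive Hi) [j Hj ->] ->] := phase1_step_mem (S (r + m) i) (received (r + m) i).
by apply: IH Hj; lia.
Qed.

Lemma phase1_agreement (i0 : 'I_n) : num_crashes crash < 2 * R1 ->
  exists u v, [/\ rank_key u <= rank_key v, (exists a, u = inp a), (exists b, v = inp b) &
    forall i, alive_after crash R1 i -> on_segment sp u v (S R1 i)].
Proof.
move=> Hf; have [r Hr Hquiet] := quiet_round Hf.
have [i1 [i2 Hcls]] : exists i1 i2, {in alive_after crash r.+1,
    forall i, S r.+1 i = S r.+1 i1 \/ S r.+1 i = S r.+1 i2}.
  apply: (@two_classes _ _ (alive_after crash r.+1) (hears_crasher r) (S r.+1) i0).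
  by move=> i k Hi Hk Hb; apply: (phase1_quiet_round Hr Hquiet Hb Hi Hk).
have [a1 E1] := phase1_input i1 Hr; have [a2 E2] := phase1_input i2 Hr.
have Hlo : forall i, alive_after crash R1 i -> lo (S R1 i) \in [:: inp a1; inp a2].
  apply: (phase1_stable Hr) => i /Hcls [] ->;
  by rewrite ?E1 ?E2 !inE eqxx ?orbT.
have settled u v : [:: inp a1; inp a2] =i [:: u; v] ->
    forall i, alive_after crash R1 i -> on_segment sp u v (S R1 i).
  move=> Euv i Hi; have := Hlo i Hi; rewrite Euv.
  have [c ->] := phase1_input i (leqnn R1); rewrite /lo /= !inE => /orP [] /eqP ->; constructor.
have [Hkey|Hkey] := leqP (rank_key (inp a1)) (rank_key (inp a2)).
- exists (inp a1), (inp a2); split; [done|by exists a1|by exists a2|].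
  exact: (settled (inp a1) (inp a2)).
- exists (inp a2), (inp a1); split; [exact: ltnW|by exists a2|by exists a1|].
  by apply: settled => z; rewrite !inE orbC.
Qed.

Lemma phase2_invariant u v : rank_key u <= rank_key v ->
  (forall i, alive_after crash R1 i -> on_segment sp u v (S R1 i)) ->
  forall k,
  (forall i, alive_after crash (R1 + k) i -> on_segment sp u v (S (R1 + k) i)) /\
  (forall i j, alive_after crash (R1 + k) i -> alive_after crash (R1 + k) j ->
     coord sp u v (S (R1 + k) i) <= coord sp u v (S (R1 + k) j) + iter k uphalf (size (sp u v))).
Proof.
move=> Hkey Hseg0; elim=> [|k [Hseg IH]].
  by rewrite addn0; split => // i j Hi _ /=; have := coord_le (Hseg0 i Hi); lia.
have Hstep i : S (R1 + k).+1 i = phase2_step sp (S (R1 + k) i) (received (R1 + k) i).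
  by rewrite run_succ /round_step ifN //; lia.
have Hinbox i : alive_after crash (R1 + k).+1 i ->
    {in S (R1 + k) i :: received (R1 + k) i, forall s, on_segment sp u v s}.
  by move=> Hi s /(inbox_alive Hi) [j /Hseg Hj ->].
rewrite addnS; split=> [i Hi | i j Hi Hj].
  by rewrite Hstep; have [] := phase2_step_spec Hkey (Hinbox i Hi).
rewrite !Hstep; have [_ [s1 [s2 [Hs1 Hs2 Hbi ->]]]] := phase2_step_spec Hkey (Hinbox i Hi).
have [_ [t1 [t2 [Ht1 Ht2 Hbj ->]]]] := phase2_step_spec Hkey (Hinbox j Hj).
rewrite iterS; apply: midpoint_spread.
- have Hij : S (R1 + k) i \in S (R1 + k) j :: received (R1 + k) j.
    by rewrite inE received_sender ?orbT // alive_sends.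
  have /andP [Hs1i _] := Hbi _ (mem_head _ _); have /andP [_ Hit2] := Hbj _ Hij.
  exact: leq_trans Hs1i Hit2.
- have [j2 Hj2 ->] := inbox_alive Hi Hs2; have [j1 Hj1 ->] := inbox_alive Hj Ht1.
  exact: IH.
Qed.

End Execution.

Theorem mainTheorem8 (T : finType) (e : rel T)
    (e_sym : symmetric e) (e_irr : irreflexive e)
    (e_conn : forall x y : T, connect e x y)
    (d : nat) (hd : is_diam e d) (n f : nat) (hfn : f < n) :
  exists dec : view n T -> T,
    solves_GAA e f (f./2 + up_log 2 d + 1) dec.
Proof.
pose sp a b := sval (shortest_walk_sig (e_conn a b)).
have sp_shortest a b : shortest_walk e a b (sp a b) := svalP (shortest_walk_sig (e_conn a b)).
exists (decide sp (f./2 + 1)) => inp crash deliv Hf; rewrite addnAC.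
have i0 : 'I_n := Ordinal (leq_ltn_trans (leq0n f) hfn).
have few_crashes : num_crashes crash < 2 * (f./2 + 1) by lia.
have [u [v [Hkey [a Ea] [b Eb] Hseg0]]] := phase1_agreement sp inp deliv i0 few_crashes.
have [Hseg Hspread] := phase2_invariant Hkey Hseg0 (up_log 2 d).
have [walk_uv last_uv shortest_uv] := sp_shortest u v.
have close : iter (up_log 2 d) uphalf (size (sp u v)) <= 1.
  apply: iter_uphalf_le1; have [p [Hp Hl Hsize]] := hd.1 u v.
  exact: leq_trans (shortest_uv p Hp Hl) (leq_trans Hsize (up_logP d (isT : 1 < 2))).
split=> [i j Hi Hj | i Hi] /=; rewrite /decide ?(vertex_coord (Hseg _ Hi) last_uv).
- rewrite (vertex_coord (Hseg _ Hj) last_uv).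
  have := Hspread i j Hi Hj; have := Hspread j i Hj Hi.
  have := coord_le (Hseg _ Hi); have := coord_le (Hseg _ Hj).
  by move=> *; apply: walk_close_vertices => //; lia.
- exists a, b; rewrite -Ea -Eb; exists (sp u v); split => //.
  by apply: mem_nth; rewrite ltnS (coord_le (Hseg _ Hi)).
Qed.
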